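(* For every $h>1/3$ and $q>1/2$ there is an instance with two groups of additive agents in which no allocation is $h$-democratic $q$-fraction-MMS-fair.
   Context: There is a finite set $G$ of goods and two groups $A_1,A_2$ with $n_i\ge1$ agents in $A_i$. Each agent has an additive utility $u_a:2^G\to\mathbb{R}_{\ge0}$. An allocation is a partition $(G_1,G_2)$ of $G$; agents of $A_i$ get $u_a(G_i)$. $\mathrm{MMS}^2_a(G)=\max\min(u_a(P_1),u_a(P_2))$ over partitions $(P_1,P_2)$ of $G$. The allocation is $q$-fraction-MMS-fair for $a\in A_i$ if $u_a(G_i)\ge q\,\mathrm{MMS}^2_a(G)$. An allocation is $h$-democratic fair if for each $i$ at least $h\cdot n_i$ agents of $A_i$ find it fair. *)

From HB Require Import structures.
From mathcomp Require Import all_boot all_order all_algebra.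
Set Implicit Arguments. Unset Strict Implicit. Unset Printing Implicit Defensive.
Import Order.TTheory GRing.Theory Num.Theory.
Local Open Scope ring_scope.

Definition util (R : realFieldType) (G : finType) (w : G -> R) (S : {set G}) : R :=
  \sum_(g in S) w g.

(* Partitions of G into two (possibly empty) parts correspond to subsets P.
   The fold starts at 0, which is harmless since utilities are nonnegative. *)
Definition mms2 (R : realFieldType) (G : finType) (w : G -> R) : R :=
  \big[Num.max/0]_(P : {set G}) Num.min (util w P) (util w (~: P)).

Definition qmms_fair (R : realFieldType) (G : finType) (q : R) (w : G -> R)
  (S : {set G}) : bool :=
  q * mms2 w <= util w S.

Definition group_hfair (R : realFieldType) (G : finType) (h q : R) (n : nat)
  (u : 'I_n -> G -> R) (S : {set G}) : Prop :=
  h * n%:R <= (#|[set a : 'I_n | qmms_fair q (u a) S]|)%:R.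

Definition hdem_qmms (R : realFieldType) (G : finType) (h q : R) (n1 n2 : nat)
  (u1 : 'I_n1 -> G -> R) (u2 : 'I_n2 -> G -> R) (S : {set G}) : Prop :=
  group_hfair h q u1 S /\ group_hfair h q u2 (~: S).

From HB Require Import structures.
From mathcomp Require Import all_boot all_order all_algebra.
From mathcomp Require Import zify.
Import Order.TTheory GRing.Theory Num.Theory.
Local Open Scope ring_scope.

(* Three goods and three identical groups of three agents; agent [a] values
   good [a] at 2 and the other two goods at 1.  Splitting off good [a] shows
   that its MMS is at least 2, while a bundle of at most one good is worth at
   most 1 < 2q to every agent except the owner of that good.  In any
   allocation one group receives at most one good, so at most one of its three
   agents is satisfied, and 1 < 3h. *)

Lemma util_le_card {R : realFieldType} {G : finType} (w : G -> R) (S : {set G}) :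
  (forall g, g \in S -> w g <= 1) -> util w S <= #|S|%:R.
Proof.
move=> w_le1; rewrite /util -sumr_const.
exact: ler_sum.
Qed.

Lemma le_mms2 {R : realFieldType} {G : finType} (w : G -> R) (P : {set G}) :
  Num.min (util w P) (util w (~: P)) <= mms2 w.
Proof. exact: le_bigmax. Qed.

Definition spike_util (R : realFieldType) (a g : 'I_3) : R :=
  if a == g then 2 else 1.

Lemma spike_util_ge0 (R : realFieldType) (a g : 'I_3) : 0 <= spike_util R a g.
Proof. by rewrite /spike_util; case: eqP. Qed.

Lemma spike_mms2 (R : realFieldType) (a : 'I_3) : 2 <= mms2 (spike_util R a).
Proof.
apply: le_trans (le_mms2 _ [set a]).
have -> : util (spike_util R a) [set a] = 2 by rewrite /util big_set1 /spike_util eqxx.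
have -> : util (spike_util R a) (~: [set a]) = 2.
  rewrite /util (eq_bigr (fun _ => 1)); last first.
    by move=> g; rewrite !inE /spike_util eq_sym => /negbTE ->.
  by rewrite sumr_const cardsC1 card_ord.
by rewrite minxx.
Qed.

Lemma spike_fair_mem (R : realFieldType) (q : R) (a : 'I_3) (T : {set 'I_3}) :
  1 / 2 < q -> (#|T| <= 1)%N -> qmms_fair q (spike_util R a) T -> a \in T.
Proof.
move=> half_lt_q card_T fair; apply/negPn/negP => aNT.
have value_le1 : util (spike_util R a) T <= 1.
  rewrite -(ler_nat R) in card_T; apply: le_trans card_T; apply: util_le_card.
  by move=> g gT; rewrite /spike_util; case: eqP => // ag; rewrite ag gT in aNT.
have : 1 < q * mms2 (spike_util R a).
  apply: lt_le_trans (_ : q * 2 <= _); last first.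
    by rewrite ler_pM2l ?spike_mms2 // (lt_trans _ half_lt_q) ?divr_gt0.
  by rewrite -ltr_pdivrMr.
by rewrite ltNge (le_trans fair value_le1).
Qed.

Lemma small_bundle_not_hfair (R : realFieldType) (h q : R) (T : {set 'I_3}) :
  1 / 3 < h -> 1 / 2 < q -> (#|T| <= 1)%N ->
  ~ group_hfair h q (@spike_util R) T.
Proof.
move=> third_lt_h half_lt_q card_T; rewrite /group_hfair.
have few_fair : (#|[set a : 'I_3 | qmms_fair q (spike_util R a) T]| <= 1)%N.
  apply: (leq_trans _ card_T); apply: subset_leq_card; apply/subsetP => a.
  by rewrite inE; apply: spike_fair_mem half_lt_q card_T.
rewrite -(ler_nat R) in few_fair.
have one_lt : 1 < h * 3%:R by rewrite -ltr_pdivrMr.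
by move=> hfair; have := lt_le_trans one_lt (le_trans hfair few_fair); rewrite ltxx.
Qed.

Lemma card_small_or_co_small (S : {set 'I_3}) :
  (#|S| <= 1)%N \/ (#|~: S| <= 1)%N.
Proof. by have := cardsC S; rewrite card_ord; lia. Qed.

Theorem mainTheorem11 (R : realFieldType) (h q : R) :
  1 / 3 < h -> 1 / 2 < q ->
  exists (G : finType) (n1 n2 : nat)
         (u1 : 'I_n1 -> G -> R) (u2 : 'I_n2 -> G -> R),
    [/\ (0 < n1)%N, (0 < n2)%N,
        (forall a g, 0 <= u1 a g),
        (forall a g, 0 <= u2 a g) &
        forall S : {set G}, ~ hdem_qmms h q u1 u2 S].
Proof.
move=> third_lt_h half_lt_q.
exists 'I_3, 3%N, 3%N, (@spike_util R), (@spike_util R).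
split=> // [||S [fair1 fair2]]; try exact: spike_util_ge0.
have [card_S|card_CS] := card_small_or_co_small S.
- exact: small_bundle_not_hfair card_S fair1.
- exact: small_bundle_not_hfair card_CS fair2.
Qed.
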